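(* Let $M$ be a proper metric space and $A_0,\dots,A_n$ a coarsely transverse $n$-partition of $M$. Then there exists a coarse map $f:M\to\mathrm{C}^n$ such that $f^{-1}(A_i^{\mathrm{std}})=A_i$ for $i=0,\dots,n$.
   Context: For $Y\subseteq M$, $Y_R=\{x:d(x,Y)\le R\}$. A coarsely transverse $n$-partition is a collection of pairwise disjoint Borel sets $A_0,\dots,A_n$ with union $M$ such that $(A_0)_R\cap\dots\cap(A_n)_R$ is bounded for all $R\ge0$. $\mathrm{C}^n$ is the boundary of $\mathbb{R}^{n+1}_{\ge0}=\{x\in\mathbb{R}^{n+1}: x_a\ge0\ \forall a\}$, i.e. the set of $x\in\mathbb{R}^{n+1}_{\ge0}$ with $x_a=0$ for some $a$, with the max metric. Its standard partition is $A_i^{\mathrm{std}}=\{x\in\mathrm{C}^n: x_0,\dots,x_{i-1}>0,\ x_i=0\}$. A coarse map is a Borel map that is controlled (for each $r>0$ there is $R>0$ with $d(x,y)\le r\Rightarrow d(f(x),f(y))\le R$) and proper (preimages of bounded sets are bounded). *)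

From Stdlib Require Import Reals List.
Open Scope R_scope.

Definition is_metric {M : Type} (d : M -> M -> R) : Prop :=
  (forall x y, 0 <= d x y) /\
  (forall x y, d x y = 0 <-> x = y) /\
  (forall x y, d x y = d y x) /\
  (forall x y z, d x z <= d x y + d y z).

Definition open_set {M : Type} (d : M -> M -> R) (U : M -> Prop) : Prop :=
  forall x, U x -> exists e, 0 < e /\ forall y, d x y < e -> U y.

Definition closed_set {M : Type} (d : M -> M -> R) (F : M -> Prop) : Prop :=
  open_set d (fun x => ~ F x).

Definition bounded {M : Type} (d : M -> M -> R) (A : M -> Prop) : Prop :=
  exists r, forall x y, A x -> A y -> d x y <= r.

Definition compact_set {M : Type} (d : M -> M -> R) (K : M -> Prop) : Prop :=
  forall (I : Type) (U : I -> M -> Prop),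
    (forall i, open_set d (U i)) ->
    (forall x, K x -> exists i, U i x) ->
    exists l : list I, forall x, K x -> exists i, In i l /\ U i x.

Definition proper_space {M : Type} (d : M -> M -> R) : Prop :=
  forall K, closed_set d K -> bounded d K -> compact_set d K.

Definition sigma_algebra {M : Type} (S : (M -> Prop) -> Prop) : Prop :=
  S (fun _ => True) /\
  (forall A, S A -> S (fun x => ~ A x)) /\
  (forall F : nat -> M -> Prop, (forall k, S (F k)) -> S (fun x => exists k, F k x)).

Definition borel {M : Type} (d : M -> M -> R) (A : M -> Prop) : Prop :=
  forall S : (M -> Prop) -> Prop, sigma_algebra S ->
    (forall U, open_set d U -> S U) -> S A.

(** Y_R = { x : d(x,Y) <= R }, with d(x,Y) = inf_{y in Y} d(x,y) (= +oo if Y empty). *)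
Definition thick {M : Type} (d : M -> M -> R) (Y : M -> Prop) (r : R) : M -> Prop :=
  fun x => forall e, 0 < e -> exists y, Y y /\ d x y < r + e.

Definition coarsely_transverse_partition {M : Type} (d : M -> M -> R)
  (n : nat) (A : nat -> M -> Prop) : Prop :=
  (forall i, (i <= n)%nat -> borel d (A i)) /\
  (forall i j x, (i <= n)%nat -> (j <= n)%nat -> i <> j -> A i x -> A j x -> False) /\
  (forall x, exists i, (i <= n)%nat /\ A i x) /\
  (forall r, 0 <= r ->
     bounded d (fun x => forall i, (i <= n)%nat -> thick d (A i) r x)).

(** The space C^n: points of R^{n+1} (coordinates 0..n; coordinates > n are 0)
    with all coordinates >= 0 and at least one coordinate 0. *)
Definition in_Cn (n : nat) (p : nat -> R) : Prop :=
  (forall i, (n < i)%nat -> p i = 0) /\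
  (forall i, (i <= n)%nat -> 0 <= p i) /\
  (exists i, (i <= n)%nat /\ p i = 0).

Definition Cn (n : nat) : Type := { p : nat -> R | in_Cn n p }.

Fixpoint maxdist (n : nat) (p q : nat -> R) : R :=
  match n with
  | O => Rabs (p O - q O)
  | S k => Rmax (maxdist k p q) (Rabs (p (S k) - q (S k)))
  end.

Definition dCn (n : nat) (p q : Cn n) : R := maxdist n (proj1_sig p) (proj1_sig q).

Definition Astd (n i : nat) (p : Cn n) : Prop :=
  (forall j, (j < i)%nat -> 0 < proj1_sig p j) /\ proj1_sig p i = 0.

Definition borel_map {M N : Type} (dM : M -> M -> R) (dN : N -> N -> R) (f : M -> N) : Prop :=
  forall B, borel dN B -> borel dM (fun x => B (f x)).

Definition controlled {M N : Type} (dM : M -> M -> R) (dN : N -> N -> R) (f : M -> N) : Prop :=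
  forall r, 0 < r -> exists R', 0 < R' /\
    forall x y, dM x y <= r -> dN (f x) (f y) <= R'.

Definition metric_proper_map {M N : Type} (dM : M -> M -> R) (dN : N -> N -> R) (f : M -> N) : Prop :=
  forall B, bounded dN B -> bounded dM (fun x => B (f x)).

Definition coarse_map {M N : Type} (dM : M -> M -> R) (dN : N -> N -> R) (f : M -> N) : Prop :=
  borel_map dM dN f /\ controlled dM dN f /\ metric_proper_map dM dN f.

From Stdlib Require Import Reals Lra Lia Arith Classical ClassicalEpsilon.
From Stdlib Require Import FunctionalExtensionality PropExtensionality ProofIrrelevance.
(* Imported last so that its [open_set] shadows the one of Stdlib's Rtopology. *)
Open Scope R_scope.

(* Let D_j(x) be the distance from x to A_j (a base point x0 is adjoined to
   A_j so that this is defined when A_j is empty).  For x in A_i put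
   f(x)_i = 0 and f(x)_j = 1 + D_j(x) for j <> i.  The shift by 1 makes i the
   only vanishing coordinate of f(x), so f^{-1}(A_i^std) = A_i.  Each
   coordinate lies between D_j(x) and 1 + D_j(x) and D_j is 1-Lipschitz, so f
   is controlled; on each A_i the map f agrees with a 1-Lipschitz map, so it is
   Borel.  If f(x) stays in a bounded set, all D_j(x) are bounded by some K, so
   x is either K-close to x0 or lies in the intersection of the K-thickenings of
   all A_j, which is bounded by transversality. *)

Section Borel.

Context {M N : Type} (d : M -> M -> R) (dN : N -> N -> R).

Lemma borel_sigma_algebra : sigma_algebra (borel d).
Proof.
  split; [|split].
  - intros S HS _. apply HS.
  - intros P HP S HS HO. apply HS, HP; assumption.
  - intros F HF S HS HO. apply HS. intro k. apply HF; assumption.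
Qed.

Lemma borel_open (U : M -> Prop) : open_set d U -> borel d U.
Proof. intros HU S _ HO. apply HO, HU. Qed.

Lemma borel_ext (P Q : M -> Prop) : (forall x, P x <-> Q x) -> borel d P -> borel d Q.
Proof.
  intros HPQ HP. replace Q with P; [exact HP|].
  extensionality x. apply propositional_extensionality, HPQ.
Qed.

Lemma borel_empty : borel d (fun _ => False).
Proof.
  destruct borel_sigma_algebra as [Htrue [Hcompl _]].
  apply (borel_ext (fun x => ~ True)); [tauto|]. apply Hcompl, Htrue.
Qed.

Lemma borel_inter (P Q : M -> Prop) :
  borel d P -> borel d Q -> borel d (fun x => P x /\ Q x).
Proof.
  intros HP HQ. destruct borel_sigma_algebra as [_ [Hcompl Hunion]].
  pose (F k := match k with O => P | S _ => Q end).
  apply (borel_ext (fun x => ~ exists k, ~ F k x)).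
  - intros x. split.
    + intros Hx. split; apply NNPP; intros Hn; apply Hx; [exists O | exists 1%nat]; exact Hn.
    + intros [HPx HQx] [[|k] Hk]; contradiction.
  - apply Hcompl, (Hunion (fun k x => ~ F k x)). intros [|k]; apply Hcompl; assumption.
Qed.

Lemma open_preimage_nonexpansive (f : M -> N) (U : N -> Prop) :
  (forall x y, dN (f x) (f y) <= d x y) -> open_set dN U -> open_set d (fun x => U (f x)).
Proof.
  intros Hf HU x Hx. destruct (HU _ Hx) as [e [He HUe]].
  exists e. split; [exact He|]. intros y Hy. apply HUe.
  eapply Rle_lt_trans; [apply Hf | exact Hy].
Qed.

Lemma borel_map_of_open_preimage (f : M -> N) :
  (forall U, open_set dN U -> open_set d (fun x => U (f x))) -> borel_map d dN f.
Proof.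
  intros Hf B HB. destruct borel_sigma_algebra as [Htrue [Hcompl Hunion]].
  apply (HB (fun C => borel d (fun x => C (f x)))).
  - split; [exact Htrue|]. split.
    + intros C. apply Hcompl.
    + intros F. apply (Hunion (fun k x => F k (f x))).
  - intros U HU. apply borel_open, Hf, HU.
Qed.

Lemma borel_map_piecewise (n : nat) (P : nat -> M -> Prop) (f : M -> N) :
  (forall k, (k <= n)%nat -> borel d (P k)) ->
  (forall x, exists k, (k <= n)%nat /\ P k x) ->
  (forall k, (k <= n)%nat ->
     exists g, borel_map d dN g /\ forall x, P k x -> f x = g x) ->
  borel_map d dN f.
Proof.
  intros HP Hcover Hpiece B HB. destruct borel_sigma_algebra as [_ [_ Hunion]].
  apply (borel_ext (fun x => exists k, (k <= n)%nat /\ P k x /\ B (f x))).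
  { intros x. split; [intros [k [_ [_ Hx]]]; exact Hx|].
    intros Hx. destruct (Hcover x) as [k [Hk Hkx]]. exists k. auto. }
  apply (Hunion (fun k x => (k <= n)%nat /\ P k x /\ B (f x))). intros k.
  destruct (le_dec k n) as [Hk|Hk].
  - destruct (Hpiece k Hk) as [g [Hg Hfg]].
    apply (borel_ext (fun x => P k x /\ B (g x))).
    + intros x. split.
      * intros [Hx HBx]. rewrite Hfg; auto.
      * intros [_ [Hx HBx]]. rewrite <- Hfg; auto.
    + apply borel_inter; [apply HP, Hk | exact (Hg B HB)].
  - apply (borel_ext (fun _ => False)); [tauto | apply borel_empty].
Qed.

Lemma coarse_map_of_empty (f : M -> N) : ~ inhabited M -> coarse_map d dN f.
Proof.
  intros HM. split; [|split].
  - intros B _. apply (borel_ext (fun _ => True)).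
    + intros x. exfalso. exact (HM (inhabits x)).
    + apply borel_sigma_algebra.
  - intros r _. exists 1. split; [lra|]. intros x. exfalso. exact (HM (inhabits x)).
  - intros B _. exists 0. intros x. exfalso. exact (HM (inhabits x)).
Qed.

End Borel.

Section DistanceToSet.

Context {M : Type} (d : M -> M -> R).
Hypothesis d_metric : is_metric d.

Lemma dist_nonneg x y : 0 <= d x y.
Proof. apply d_metric. Qed.

Lemma dist_self x : d x x = 0.
Proof. apply d_metric. reflexivity. Qed.

Lemma dist_sym x y : d x y = d y x.
Proof. apply d_metric. Qed.

Lemma dist_triangle x y z : d x z <= d x y + d y z.
Proof. apply d_metric. Qed.

Lemma bounded_in_ball (P : M -> Prop) c :
  bounded d P -> exists R, forall x, P x -> d x c <= R.
Proof.
  intros [r Hr]. destruct (classic (exists p, P p)) as [[p Hp]|Hnone].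
  - exists (r + d p c). intros x Hx.
    pose proof (Hr x p Hx Hp). pose proof (dist_triangle x p c). lra.
  - exists 0. intros x Hx. exfalso. eauto.
Qed.

Lemma ball_bounded (P : M -> Prop) c R :
  (forall x, P x -> d x c <= R) -> bounded d P.
Proof.
  intros HR. exists (2 * R). intros x y Hx Hy.
  pose proof (HR x Hx). pose proof (HR y Hy).
  pose proof (dist_triangle x c y). rewrite (dist_sym c y) in *. lra.
Qed.

Definition is_inf_dist (Y : M -> Prop) (x : M) (m : R) : Prop :=
  (forall y, Y y -> m <= d x y) /\
  (forall e, 0 < e -> exists y, Y y /\ d x y < m + e).

Definition dist_set (Y : M -> Prop) (x : M) : R := epsilon (inhabits 0) (is_inf_dist Y x).

Lemma is_inf_dist_exists (Y : M -> Prop) x : (exists y, Y y) -> exists m, is_inf_dist Y x m.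
Proof.
  intros [y0 Hy0].
  set (E r := exists y, Y y /\ r = - d x y).
  assert (HE : bound E).
  { exists 0. intros r [y [_ ->]]. pose proof (dist_nonneg x y). lra. }
  destruct (completeness E HE (ex_intro _ (- d x y0) (ex_intro _ y0 (conj Hy0 eq_refl))))
    as [m [Hub Hlub]].
  exists (- m). split.
  - intros y Hy. assert (Hr : E (- d x y)) by (exists y; auto). specialize (Hub _ Hr). lra.
  - intros e He. apply NNPP. intros Hno.
    assert (Hub' : is_upper_bound E (m - e)).
    { intros r [y [Hy ->]]. apply Rnot_lt_le. intros Hlt.
      apply Hno. exists y. split; [exact Hy | lra]. }
    specialize (Hlub _ Hub'). lra.
Qed.

Section NonemptySet.

Variables (Y : M -> Prop) (y0 : M).
Hypothesis Y_y0 : Y y0.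

Lemma dist_set_spec x : is_inf_dist Y x (dist_set Y x).
Proof. unfold dist_set. apply epsilon_spec, is_inf_dist_exists. exists y0. exact Y_y0. Qed.

Lemma dist_set_le x y : Y y -> dist_set Y x <= d x y.
Proof. apply (dist_set_spec x). Qed.

Lemma dist_set_approx x e : 0 < e -> exists y, Y y /\ d x y < dist_set Y x + e.
Proof. apply (dist_set_spec x). Qed.

Lemma dist_set_nonneg x : 0 <= dist_set Y x.
Proof.
  apply Rle_plus_epsilon. intros e He.
  destruct (dist_set_approx x e He) as [y [_ Hy]]. pose proof (dist_nonneg x y). lra.
Qed.

Lemma dist_set_lipschitz x x' : dist_set Y x <= dist_set Y x' + d x x'.
Proof.
  apply Rle_plus_epsilon. intros e He.
  destruct (dist_set_approx x' e He) as [y [Hy Hx'y]].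
  pose proof (dist_set_le x y Hy). pose proof (dist_triangle x x' y). lra.
Qed.

End NonemptySet.

Lemma thick_of_dist_set_adjoin (Y : M -> Prop) c x K :
  dist_set (fun y => Y y \/ y = c) x <= K -> K < d x c -> thick d Y K x.
Proof.
  intros HK Hc e He.
  assert (Hpos : 0 < Rmin e (d x c - K)) by (apply Rmin_pos; lra).
  pose proof (Rmin_l e (d x c - K)). pose proof (Rmin_r e (d x c - K)).
  destruct (dist_set_approx (fun y => Y y \/ y = c) c (or_intror eq_refl) x _ Hpos)
    as [y [[Hy | ->] Hxy]].
  - exists y. split; [exact Hy | lra].
  - lra.
Qed.

End DistanceToSet.

Lemma maxdist_le n (p q : nat -> R) r :
  (forall j, (j <= n)%nat -> Rabs (p j - q j) <= r) -> maxdist n p q <= r.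
Proof.
  induction n as [|n IH]; intros H; simpl.
  - apply H. reflexivity.
  - apply Rmax_lub.
    + apply IH. intros j Hj. apply H. auto.
    + apply H. reflexivity.
Qed.

Lemma Rabs_le_maxdist n (p q : nat -> R) j :
  (j <= n)%nat -> Rabs (p j - q j) <= maxdist n p q.
Proof.
  induction n as [|n IH]; intros Hj; simpl.
  - inversion Hj. apply Rle_refl.
  - destruct (Nat.eq_dec j (S n)) as [->|Hne].
    + apply Rmax_r.
    + eapply Rle_trans; [apply IH | apply Rmax_l]. lia.
Qed.

Lemma maxdist_nonneg n (p q : nat -> R) : 0 <= maxdist n p q.
Proof. eapply Rle_trans; [apply Rabs_pos | apply (Rabs_le_maxdist n p q 0), Nat.le_0_l]. Qed.

Section Construction.

Variables (M : Type) (d : M -> M -> R) (n : nat) (A : nat -> M -> Prop) (x0 : M).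
Hypothesis d_metric : is_metric d.

Definition dist_piece (j : nat) (x : M) : R := dist_set d (fun y => A j y \/ y = x0) x.

Lemma dist_piece_nonneg j x : 0 <= dist_piece j x.
Proof. apply (dist_set_nonneg d d_metric _ x0). right. reflexivity. Qed.

Lemma dist_piece_lipschitz j x y : dist_piece j x <= dist_piece j y + d x y.
Proof. apply (dist_set_lipschitz d d_metric _ x0). right. reflexivity. Qed.

Lemma dist_piece_le_base j x : dist_piece j x <= d x x0.
Proof. apply (dist_set_le d d_metric _ x0); right; reflexivity. Qed.

Lemma dist_piece_mem j x : A j x -> dist_piece j x = 0.
Proof.
  intros Hx. apply Rle_antisym; [|apply dist_piece_nonneg].
  rewrite <- (dist_self d d_metric x).
  apply (dist_set_le d d_metric _ x0); [right | left]; auto.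
Qed.

Definition chart (i : nat) (x : M) (j : nat) : R :=
  if Nat.eq_dec j i then 0 else if le_dec j n then 1 + dist_piece j x else 0.

Lemma chart_at i x : chart i x i = 0.
Proof. unfold chart. destruct (Nat.eq_dec i i); [reflexivity | contradiction]. Qed.

Lemma chart_off i x j : j <> i -> (j <= n)%nat -> chart i x j = 1 + dist_piece j x.
Proof.
  intros Hji Hj. unfold chart.
  destruct (Nat.eq_dec j i); [contradiction|].
  destruct (le_dec j n); [reflexivity | contradiction].
Qed.

Lemma chart_off_pos i x j : j <> i -> (j <= n)%nat -> 0 < chart i x j.
Proof.
  intros Hji Hj. rewrite chart_off by assumption. pose proof (dist_piece_nonneg j x). lra.
Qed.

Lemma chart_in_Cn i x : (i <= n)%nat -> in_Cn n (chart i x).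
Proof.
  intros Hi. split; [|split].
  - intros j Hj. unfold chart.
    destruct (Nat.eq_dec j i); [reflexivity|]. destruct (le_dec j n); [lia | reflexivity].
  - intros j Hj. destruct (Nat.eq_dec j i) as [->|Hji].
    + rewrite chart_at. apply Rle_refl.
    + apply Rlt_le, chart_off_pos; assumption.
  - exists i. split; [exact Hi | apply chart_at].
Qed.

Lemma Astd_chart i k x (p : Cn n) :
  (i <= n)%nat -> proj1_sig p = chart i x -> Astd n k p <-> k = i.
Proof.
  intros Hi Hp. unfold Astd. rewrite Hp. split.
  - intros [Hpos Hk]. destruct (lt_eq_lt_dec k i) as [[Hlt|Heq]|Hgt].
    + pose proof (chart_off_pos i x k ltac:(lia) ltac:(lia)). lra.
    + exact Heq.
    + specialize (Hpos i Hgt). rewrite chart_at in Hpos. lra.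
  - intros ->. split; [|apply chart_at].
    intros j Hj. apply chart_off_pos; lia.
Qed.

(* [A i x] makes the i-th distance 0, matching the vanishing i-th coordinate. *)
Lemma chart_between i x j :
  A i x -> (j <= n)%nat -> dist_piece j x <= chart i x j <= 1 + dist_piece j x.
Proof.
  intros Hx Hj. destruct (Nat.eq_dec j i) as [->|Hji].
  - rewrite chart_at, dist_piece_mem by exact Hx. lra.
  - rewrite chart_off by assumption. lra.
Qed.

Lemma chart_nonexpansive i x y j : Rabs (chart i x j - chart i y j) <= d x y.
Proof.
  unfold chart. destruct (Nat.eq_dec j i); [|destruct (le_dec j n)].
  - rewrite Rminus_0_r, Rabs_R0. apply (dist_nonneg d d_metric).
  - pose proof (dist_piece_lipschitz j x y). pose proof (dist_piece_lipschitz j y x).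
    rewrite (dist_sym d d_metric y x) in *. apply Rabs_le. lra.
  - rewrite Rminus_0_r, Rabs_R0. apply (dist_nonneg d d_metric).
Qed.

Hypothesis A_cover : forall x, exists i, (i <= n)%nat /\ A i x.
Hypothesis A_disjoint :
  forall i j x, (i <= n)%nat -> (j <= n)%nat -> i <> j -> A i x -> A j x -> False.

Definition piece_index (x : M) : nat :=
  epsilon (inhabits 0%nat) (fun i => (i <= n)%nat /\ A i x).

Lemma piece_index_spec x : (piece_index x <= n)%nat /\ A (piece_index x) x.
Proof. unfold piece_index. apply epsilon_spec, A_cover. Qed.

Lemma piece_index_unique i x : (i <= n)%nat -> A i x -> piece_index x = i.
Proof.
  intros Hi Hx. destruct (piece_index_spec x) as [Hk Hkx].
  destruct (Nat.eq_dec (piece_index x) i) as [Heq|Hne]; [exact Heq|].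
  exfalso. exact (A_disjoint _ _ x Hk Hi Hne Hkx Hx).
Qed.

Definition partition_map (x : M) : Cn n :=
  exist _ (chart (piece_index x) x) (chart_in_Cn _ x (proj1 (piece_index_spec x))).

Lemma partition_map_Astd i x : (i <= n)%nat -> Astd n i (partition_map x) <-> A i x.
Proof.
  intros Hi. destruct (piece_index_spec x) as [Hk Hkx].
  rewrite (Astd_chart (piece_index x) i x (partition_map x) Hk eq_refl). split.
  - intros ->. exact Hkx.
  - intros Hix. symmetry. apply piece_index_unique; assumption.
Qed.

Lemma partition_map_between x j :
  (j <= n)%nat -> dist_piece j x <= proj1_sig (partition_map x) j <= 1 + dist_piece j x.
Proof. intros Hj. apply chart_between; [apply piece_index_spec | exact Hj]. Qed.

Lemma partition_map_coord_close x y j :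
  Rabs (proj1_sig (partition_map x) j - proj1_sig (partition_map y) j) <= 1 + d x y.
Proof.
  destruct (le_dec j n) as [Hj|Hj].
  - pose proof (partition_map_between x j Hj). pose proof (partition_map_between y j Hj).
    pose proof (dist_piece_lipschitz j x y). pose proof (dist_piece_lipschitz j y x).
    rewrite (dist_sym d d_metric y x) in *. apply Rabs_le. lra.
  - rewrite (proj1 (proj2_sig (partition_map x)) j), (proj1 (proj2_sig (partition_map y)) j)
      by lia.
    rewrite Rminus_0_r, Rabs_R0. pose proof (dist_nonneg d d_metric x y). lra.
Qed.

Lemma partition_map_controlled : controlled d (dCn n) partition_map.
Proof.
  intros r Hr. exists (1 + r). split; [lra|]. intros x y Hxy.
  apply maxdist_le. intros j _. pose proof (partition_map_coord_close x y j). lra.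
Qed.

Lemma partition_map_borel :
  (forall i, (i <= n)%nat -> borel d (A i)) -> borel_map d (dCn n) partition_map.
Proof.
  intros HA. apply (borel_map_piecewise d (dCn n) n A); [exact HA | exact A_cover |].
  intros k Hk. exists (fun x => exist _ (chart k x) (chart_in_Cn k x Hk)). split.
  - apply (borel_map_of_open_preimage d (dCn n)). intros U HU.
    apply (open_preimage_nonexpansive d (dCn n)); [|exact HU].
    intros x y. apply maxdist_le. intros j _. apply chart_nonexpansive.
  - intros x Hx. unfold partition_map. apply subset_eq_compat.
    rewrite (piece_index_unique k x Hk Hx). reflexivity.
Qed.

Lemma dist_piece_bound_of_close x y r j :
  dCn n (partition_map x) (partition_map y) <= r -> (j <= n)%nat ->
  dist_piece j x <= 1 + r + d y x0.
Proof.
  intros Hr Hj.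
  pose proof (Rabs_le_maxdist n (proj1_sig (partition_map x)) (proj1_sig (partition_map y)) j Hj).
  unfold dCn in Hr.
  pose proof (Rle_abs (proj1_sig (partition_map x) j - proj1_sig (partition_map y) j)).
  pose proof (partition_map_between x j Hj). pose proof (partition_map_between y j Hj).
  pose proof (dist_piece_le_base j y). lra.
Qed.

Lemma partition_map_proper :
  (forall r, 0 <= r -> bounded d (fun x => forall i, (i <= n)%nat -> thick d (A i) r x)) ->
  metric_proper_map d (dCn n) partition_map.
Proof.
  intros Htrans B [r Hr].
  destruct (classic (exists x1, B (partition_map x1))) as [[x1 Hx1]|Hnone].
  2: { exists 0. intros x y Hx. exfalso. eauto. }
  set (K := 1 + r + d x1 x0).
  assert (HK : 0 <= K).
  { pose proof (Hr (partition_map x1) (partition_map x1) Hx1 Hx1).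
    pose proof (maxdist_nonneg n (proj1_sig (partition_map x1)) (proj1_sig (partition_map x1))).
    pose proof (dist_nonneg d d_metric x1 x0). unfold dCn, K in *. lra. }
  destruct (bounded_in_ball d d_metric _ x0 (Htrans K HK)) as [RT HRT].
  apply (ball_bounded d d_metric _ x0 (Rmax K RT)). intros x Hx.
  destruct (Rle_dec (d x x0) K) as [Hnear|Hfar].
  - eapply Rle_trans; [exact Hnear | apply Rmax_l].
  - eapply Rle_trans; [|apply Rmax_r]. apply HRT. intros i Hi.
    apply (thick_of_dist_set_adjoin d d_metric (A i) x0); [|lra].
    apply (dist_piece_bound_of_close x x1 r i); [apply Hr|]; assumption.
Qed.

End Construction.

Theorem lemma5p10 (M : Type) (d : M -> M -> R) (n : nat) (A : nat -> M -> Prop) :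
  is_metric d -> proper_space d ->
  coarsely_transverse_partition d n A ->
  exists f : M -> Cn n,
    coarse_map d (dCn n) f /\
    (forall i, (i <= n)%nat -> forall x, Astd n i (f x) <-> A i x).
Proof.
  intros Hd _ [HA [Hdisj [Hcover Htrans]]].
  destruct (classic (inhabited M)) as [[x0]|Hempty].
  - exists (partition_map M d n A x0 Hd Hcover). split; [split; [|split]|].
    + apply partition_map_borel; assumption.
    + apply partition_map_controlled.
    + apply partition_map_proper; assumption.
    + intros i Hi x. apply partition_map_Astd; assumption.
  - exists (fun x => False_rect _ (Hempty (inhabits x))). split.
    + apply coarse_map_of_empty, Hempty.
    + intros i _ x. exfalso. exact (Hempty (inhabits x)).
Qed.
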